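(* Let $G=(V,E)$ be a simple undirected graph with $n=|V|$ vertices and $m=|E|$ edges, let $b$ be a real number, and let $$\mathcal{P}_1=\Big\{(x,y)\in\mathbb{R}^m_{+}\times[0,1]^n:\ 1-y_u-y_v\le x_{uv}\ \text{for all } \{u,v\}\in E,\ \ \textstyle\sum_{v\in V}y_v\le b\Big\}.$$ Then: (1) for every edge $\{u,v\}\in E$, the inequality $x_{uv}\ge 0$ is facet-defining for $\mathcal{P}_1$ if $b\ge 2$; (2) for every vertex $v\in V$, the inequality $y_v\ge 0$ is facet-defining for $\mathcal{P}_1$ if $b\ge 1$; (3) for every vertex $v\in V$, the inequality $y_v\le 1$ is facet-defining for $\mathcal{P}_1$ if $b\ge 2$.
   Context: $x$ is indexed by edges and $y$ by vertices of $G$; $\mathcal{P}_1$ is the linear relaxation of the MIP formulation of the 1-hop distance-based critical node detection problem. An inequality is facet-defining if it is valid for $\mathcal{P}_1$ and the face it induces has dimension $\dim\mathcal{P}_1-1$. *)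

From mathcomp Require Import all_boot all_order all_algebra.
From mathcomp Require Import reals.
Set Implicit Arguments. Unset Strict Implicit. Unset Printing Implicit Defensive.
Import Order.TTheory GRing.Theory Num.Theory.
Local Open Scope ring_scope.

Section Defs.
Variables (R : realType) (V : finType) (adj : rel V).

Definition is_edge (s : {set V}) : bool :=
  [exists u, exists v, adj u v && (s == [set u; v])].

Definition edge := {s : {set V} | is_edge s}.

Definition point := ((edge -> R) * (V -> R))%type.

Definition P1 (b : R) (p : point) : Prop :=
  [/\ forall e : edge, 0 <= p.1 e,
      forall v : V, 0 <= p.2 v /\ p.2 v <= 1,
      forall e : edge, 1 - \sum_(w in val e) p.2 w <= p.1 e
    & \sum_(v : V) p.2 v <= b].

Definition aff_indep (k : nat) (p : 'I_k -> point) : Prop :=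
  forall c : 'I_k -> R,
    \sum_(i < k) c i = 0 ->
    (forall e, \sum_(i < k) c i * (p i).1 e = 0) ->
    (forall v, \sum_(i < k) c i * (p i).2 v = 0) ->
    forall i, c i = 0.

Definition has_aff_indep (S : point -> Prop) (k : nat) : Prop :=
  exists p : 'I_k -> point, (forall i, S (p i)) /\ aff_indep p.

(* dim S = r - 1, i.e. r is the maximal number of affinely independent
   points of S (r = 0 for the empty set, dimension -1) *)
Definition aff_rank (S : point -> Prop) (r : nat) : Prop :=
  has_aff_indep S r /\ ~ has_aff_indep S r.+1.

Definition dim_eq (S : point -> Prop) (d : int) : Prop :=
  exists r : nat, aff_rank S r /\ d = r%:Z - 1.

Definition linform (ax : edge -> R) (ay : V -> R) (p : point) : R :=
  \sum_(e : edge) ax e * p.1 e + \sum_(v : V) ay v * p.2 v.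

Definition valid_ineq (P : point -> Prop) ax ay (beta : R) : Prop :=
  forall p, P p -> linform ax ay p <= beta.

Definition face (P : point -> Prop) ax ay (beta : R) : point -> Prop :=
  fun p => P p /\ linform ax ay p = beta.

Definition facet_defining (P : point -> Prop) ax ay (beta : R) : Prop :=
  valid_ineq P ax ay beta /\
  exists d : int, dim_eq P d /\ dim_eq (face P ax ay beta) (d - 1).

Definition unit_e (e0 : edge) : edge -> R := fun e => (e == e0)%:R.
Definition unit_v (v0 : V) : V -> R := fun v => (v == v0)%:R.
Definition zero_e : edge -> R := fun _ => 0.
Definition zero_v : V -> R := fun _ => 0.

End Defs.

From mathcomp Require Import all_boot all_order all_algebra.
From mathcomp Require Import reals.
From mathcomp Require Import lra.
Set Implicit Arguments. Unset Strict Implicit. Unset Printing Implicit Defensive.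
Import Order.TTheory GRing.Theory Num.Theory.
Local Open Scope ring_scope.

(* For b >= 1 the point
   x = 1, y = 0 and its translates along every coordinate direction lie in
   P_1, so P_1 is full-dimensional.  Each of the three inequalities pins a
   single coordinate on its face, so the face has at most |E| + |V| affinely
   independent points; |E| + |V| of them are obtained from one point of the
   face whose translates along all the other coordinate directions stay in
   P_1.  For y_v >= 0 this point is x = 1, y = 0; for y_v <= 1 it is x = 1,
   y = e_v; for x_uv >= 0 it is x = 1 - e_uv, y = (e_u + e_v) / 2, which needs
   u <> v. *)

Lemma exists_lin_rel_card_lt (F : fieldType) (I : finType) k
    (A : 'I_k -> I -> F) :
  (#|I| < k)%N ->
  exists2 c : 'I_k -> F, (exists i, c i != 0) & forall j, \sum_i c i * A i j = 0.
Proof.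
move=> ltIk; pose M := \matrix_(i < k, j < #|I|) A i (enum_val j).
have : ~~ row_free M.
  by rewrite /row_free neq_ltn (leq_ltn_trans (rank_leq_col M) ltIk).
rewrite -kermx_eq0 => /rowV0Pn[v /sub_kermxP vM0 /rV0Pn[i vi0]].
exists (fun i => v 0 i); first by exists i.
move=> j; have := congr1 (fun u : 'rV_#|I| => u 0 (enum_rank j)) vM0.
rewrite /= [in X in X = _ -> _]mxE mxE => vMj0.
rewrite -[RHS]vMj0; apply: eq_bigr => l _.
by rewrite mxE enum_rankK.
Qed.

Lemma sum_delta (R : pzSemiRingType) (T : finType) (t : T) (a : T -> R) :
  \sum_s (s == t)%:R * a s = a t.
Proof.
rewrite (bigD1 t) //= eqxx mul1r big1 ?addr0 // => s /negbTE ->.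
by rewrite mul0r.
Qed.

Section Facets.
Variables (R : realType) (V : finType) (adj : rel V).
Notation pt := (point R adj).
Notation K := (edge adj + V)%type.

Definition coord (k : K) (p : pt) : R :=
  match k with inl e => p.1 e | inr v => p.2 v end.

Definition shift (q : pt) (k : K) (d : R) : pt :=
  match k with
  | inl e => (fun f => q.1 f + (f == e)%:R * d, q.2)
  | inr v => (q.1, fun w => q.2 w + (w == v)%:R * d)
  end.

Lemma coord_shift k q k' d :
  coord k (shift q k' d) = coord k q + (k == k')%:R * d.
Proof. by case: k' => [e'|v']; case: k => [e|v] /=; rewrite ?mul0r ?addr0. Qed.

Definition affine_rel (T : finType) (p : T -> pt) (c : T -> R) : Prop :=
  \sum_t c t = 0 /\ forall k, \sum_t c t * coord k (p t) = 0.

Definition affinely_indep (T : finType) (p : T -> pt) : Prop :=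
  forall c, affine_rel p c -> forall t, c t = 0.

Lemma aff_indepE k (p : 'I_k -> pt) : aff_indep p <-> affinely_indep p.
Proof.
split=> [hp c [c0 hc] | hp c c0 hx hy]; last by apply: hp; split=> // -[].
by apply: hp => // [e|v]; [exact: hc (inl e) | exact: hc (inr v)].
Qed.

Lemma affinely_indep_comp (T T' : finType) (p : T -> pt) (h : T' -> T) :
  bijective h -> affinely_indep p -> affinely_indep (p \o h).
Proof.
case=> g hK gK hp c [c0 hc] t.
have sum_g (F : T' -> R) : \sum_t F (g t) = \sum_t' F t'.
  rewrite (reindex h) /=; last by apply: onW_bij; exists g.
  by apply: eq_bigr => t' _; rewrite hK.
have := hp (c \o g) _ (h t); rewrite /= hK; apply; split=> [|k].
  exact: etrans (sum_g c) c0.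
rewrite -[RHS](hc k) -sum_g; apply: eq_bigr => t' _ /=.
by rewrite gK.
Qed.

Lemma has_aff_indep_of (S : pt -> Prop) (T : finType) (p : T -> pt) :
  (forall t, S (p t)) -> affinely_indep p -> has_aff_indep S #|T|.
Proof.
move=> Sp hp; exists (p \o enum_val); split=> [i|]; first exact: Sp.
by apply/aff_indepE; apply: affinely_indep_comp hp; exact: enum_val_bij.
Qed.

Lemma not_has_aff_indep (S : pt -> Prop) (I : finType) (F : pt -> I -> R) k :
  (#|I| < k)%N ->
  (forall (p : 'I_k -> pt) c, (forall i, S (p i)) ->
     (forall j, \sum_i c i * F (p i) j = 0) -> affine_rel p c) ->
  ~ has_aff_indep S k.
Proof.
move=> ltIk hF [p [Sp /aff_indepE hp]].
have [c [i ci0] hc] := exists_lin_rel_card_lt (fun i j => F (p i) j) ltIk.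
by move: ci0; rewrite (hp c (hF p c Sp hc)) eqxx.
Qed.

Lemma not_has_aff_indep_full (S : pt -> Prop) : ~ has_aff_indep S #|{: K}|.+2.
Proof.
apply: (@not_has_aff_indep _ _ (fun p o => if o is Some k then coord k p else 1)).
  by rewrite card_option.
move=> p c _ hc; split=> [|k]; last exact: hc (Some k).
by rewrite -[RHS](hc None); apply: eq_bigr => i _; rewrite mulr1.
Qed.

Lemma not_has_aff_indep_face (S : pt -> Prop) (kf : K) (beta : R) :
  (forall p, S p -> coord kf p = beta) -> ~ has_aff_indep S #|{: K}|.+1.
Proof.
move=> Skf.
apply: (@not_has_aff_indep _ _ (fun p k => if k == kf then 1 else coord k p))
  => // p c Sp hc.
have c0 : \sum_i c i = 0.
  by rewrite -[RHS](hc kf); apply: eq_bigr => i _; rewrite eqxx mulr1.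
split=> // k; case: (eqVneq k kf) => [->|nkf].
  by under eq_bigr => i _ do rewrite Skf //; rewrite -mulr_suml c0 mul0r.
by rewrite -[RHS](hc k); apply: eq_bigr => i _; rewrite (negbTE nkf).
Qed.

Definition star (J : finType) (q0 : pt) (dir : J -> K) (d : R) (o : option J) :=
  if o is Some j then shift q0 (dir j) d else q0.

Lemma star_affinely_indep (J : finType) q0 (dir : J -> K) d :
  injective dir -> d != 0 -> affinely_indep (star q0 dir d).
Proof.
move=> dir_inj d0 c [c0 hc].
have cS j : c (Some j) = 0.
  have := hc (dir j).
  have -> : \sum_o c o * coord (dir j) (star q0 dir d o)
          = \sum_o c o * coord (dir j) q0
            + \sum_o (o == Some j)%:R * (c (Some j) * d).
    rewrite -big_split; apply: eq_bigr => -[j'|] _ /=; last first.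
      by rewrite mul0r addr0.
    rewrite coord_shift (inj_eq dir_inj) eq_sym mulrDr.
    rewrite (inj_eq (@Some_inj _)); congr (_ + _).
    by case: (eqVneq j' j) => [->|]; rewrite ?mul1r ?mul0r ?mulr0.
  rewrite -mulr_suml c0 mul0r add0r (sum_delta _ (fun _ => c (Some j) * d)).
  by move/eqP; rewrite mulf_eq0 (negbTE d0) orbF => /eqP.
case=> [j|]; first exact: cS.
by move: c0; rewrite (bigD1 None) //= big1 ?addr0 // => -[j|] // _; exact: cS.
Qed.

Lemma sum_shift_vertex q v d :
  \sum_w (shift q (inr v) d).2 w = \sum_w q.2 w + d.
Proof. by rewrite /= big_split /= (sum_delta _ (fun _ => d)). Qed.

Lemma P1_shift_edge b q e d :
  P1 b q -> 0 <= d -> P1 b (shift q (inl e) d).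
Proof.
case=> q1_ge0 q2_01 qE qb d_ge0; split=> //= f.
  by rewrite addr_ge0 ?mulr_ge0.
by rewrite (le_trans (qE f)) // lerDl mulr_ge0.
Qed.

Lemma P1_shift_vertex b q v d :
  P1 b q -> 0 <= d -> q.2 v + d <= 1 -> \sum_w q.2 w + d <= b ->
  P1 b (shift q (inr v) d).
Proof.
case=> q1_ge0 q2_01 qE qb d_ge0 qv1 qdb; split=> //.
- move=> w /=; case: (eqVneq w v) => [->|_]; last by rewrite mul0r addr0.
  by rewrite mul1r addr_ge0 //; case: (q2_01 v).
- move=> f; rewrite (le_trans _ (qE f)) // lerD2l lerN2.
  by apply: ler_sum => w _ /=; rewrite lerDl mulr_ge0.
- by rewrite sum_shift_vertex.
Qed.

Definition qbase : pt := (fun _ => 1, fun _ => 0).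

Lemma P1_qbase b : 0 <= b -> P1 b qbase.
Proof. by move=> b_ge0; split=> /= [e|v|e|]; rewrite ?big1 ?subr0. Qed.

Lemma P1_shift_qbase b k : 1 <= b -> P1 b (shift qbase k 1).
Proof.
move=> b1; have b_ge0 : 0 <= b by lra.
case: k => [e|v]; first exact: P1_shift_edge (P1_qbase b_ge0) ler01.
by apply: P1_shift_vertex (P1_qbase b_ge0) ler01 _ _; rewrite ?big1 ?add0r.
Qed.

Lemma P1_full_dim (b : R) : 1 <= b -> aff_rank (P1 (adj:=adj) b) #|{: K}|.+1.
Proof.
move=> b1; split; last exact: not_has_aff_indep_full.
rewrite -card_option.
apply: has_aff_indep_of _ (star_affinely_indep (q0 := qbase) (@inj_id K) (oner_neq0 R)).
by case=> [k|] /=; [exact: P1_shift_qbase | apply: P1_qbase; lra].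
Qed.

Lemma facet_defining_coord b ax ay beta (kf : K) s q0 d :
  1 <= b -> valid_ineq (P1 b) ax ay beta ->
  s != 0 -> (forall p, linform ax ay p = s * coord kf p) ->
  P1 b q0 -> linform ax ay q0 = beta ->
  d != 0 -> (forall k, k != kf -> P1 b (shift q0 k d)) ->
  facet_defining (P1 b) ax ay beta.
Proof.
move=> b1 valid s0 lin q0P q0F d0 shiftP; split=> //; exists #|{: K}|%:Z; split.
  exists #|{: K}|.+1; split; first exact: P1_full_dim.
  by rewrite -addn1 PoszD addrK.
exists #|{: K}|; split=> //; split.
  pose J := {k : K | k != kf}.
  have -> : #|{: K}| = #|{: option J}|.
    by rewrite card_option card_sig cardC1 prednK //; apply/card_gt0P; exists kf.
  apply: has_aff_indep_of _ (star_affinely_indep (q0 := q0) (@val_inj _ _ J) d0).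
  case=> [[k nk]|] //=; split; first exact: shiftP.
  by rewrite lin coord_shift eq_sym (negbTE nk) mul0r addr0 -lin.
apply: (@not_has_aff_indep_face _ kf (beta / s)) => p [_ pF].
by rewrite -pF lin [s * _]mulrC mulfK.
Qed.

Lemma linform_unit_eN e p :
  linform (fun f => - unit_e R e f) (zero_v R (V:=V)) p = -1 * coord (inl e) p.
Proof.
rewrite /linform [X in _ + X]big1 ?addr0 => [|v _]; last by rewrite mul0r.
by under eq_bigr do rewrite mulNr; rewrite sumrN sum_delta mulN1r.
Qed.

Lemma linform_unit_vN v p :
  linform (zero_e R (adj:=adj)) (fun w => - unit_v R v w) p = -1 * coord (inr v) p.
Proof.
rewrite /linform [X in X + _]big1 ?add0r => [|e _]; last by rewrite mul0r.
by under eq_bigr do rewrite mulNr; rewrite sumrN sum_delta mulN1r.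
Qed.

Lemma linform_unit_v v p :
  linform (zero_e R (adj:=adj)) (unit_v R v) p = 1 * coord (inr v) p.
Proof.
rewrite /linform [X in X + _]big1 ?add0r => [|e _]; last by rewrite mul0r.
by rewrite sum_delta mul1r.
Qed.

Section EdgePoint.
Hypothesis adj_irr : irreflexive adj.
Variable e : edge adj.

Lemma card_edge : #|val e| = 2.
Proof.
case/existsP: (valP e) => u /existsP[w /andP[uw /eqP ->]].
have /negbTE nuw : u != w by apply: contraTneq uw => ->; rewrite adj_irr.
by rewrite cards2 nuw.
Qed.

Definition edge_point : pt :=
  (fun f => if f == e then 0 else 1, fun w => if w \in val e then 1 / 2 else 0).

Lemma sum_edge_point_in : \sum_(w in val e) edge_point.2 w = 1.
Proof.
rewrite (eq_bigr (fun _ => 1 / 2)) => [|w /= ->] //.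
by rewrite sumr_const card_edge mulr2n; lra.
Qed.

Lemma sum_edge_point : \sum_w edge_point.2 w = 1.
Proof.
rewrite -[RHS]sum_edge_point_in [RHS]big_mkcond.
by apply: eq_bigr => w _ /=; case: (w \in val e).
Qed.

Lemma P1_edge_point b : 1 <= b -> P1 b edge_point.
Proof.
move=> b1; split=> /= [f|w|f|]; last by rewrite sum_edge_point.
- by case: (f == e); lra.
- by case: (w \in val e); split; lra.
- case: (eqVneq f e) => [->|_]; first by rewrite sum_edge_point_in subrr.
  rewrite lerBlDr lerDl sumr_ge0 // => w _.
  by case: (w \in val e); lra.
Qed.

Lemma P1_shift_edge_point b k : 2 <= b -> P1 b (shift edge_point k (1 / 2)).
Proof.
move=> b2; have b1 : 1 <= b by lra.
case: k => [f|v]; first by apply: P1_shift_edge (P1_edge_point b1) _; lra.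
apply: P1_shift_vertex (P1_edge_point b1) _ _ _; rewrite ?sum_edge_point /=.
- lra.
- by case: (v \in val e); lra.
- lra.
Qed.

End EdgePoint.

Definition vertex_point (v : V) : pt := shift qbase (inr v) 1.

Lemma P1_vertex_point b v : 1 <= b -> P1 b (vertex_point v).
Proof. exact: P1_shift_qbase. Qed.

Lemma P1_shift_vertex_point b v k :
  2 <= b -> k != inr v -> P1 b (shift (vertex_point v) k 1).
Proof.
move=> b2 kv; have b1 : 1 <= b by lra.
case: k kv => [f|w] kv; first exact: P1_shift_edge (P1_vertex_point v b1) ler01.
have /negbTE wv : w != v by apply: contraNneq kv => ->.
apply: P1_shift_vertex (P1_vertex_point v b1) ler01 _ _.
  by rewrite /= wv mul0r !add0r.
by rewrite sum_shift_vertex big1 // add0r; lra.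
Qed.

End Facets.

Theorem proposition2 (R : realType) (V : finType) (adj : rel V)
  (adj_sym : symmetric adj) (adj_irr : irreflexive adj) (b : R) :
  [/\ (2 <= b -> forall e : edge adj,
         (* x_e >= 0, written as  - x_e <= 0 *)
         facet_defining (P1 b) (fun f => - unit_e R e f) (@zero_v R V) 0),
      (1 <= b -> forall v : V,
         (* y_v >= 0, written as  - y_v <= 0 *)
         facet_defining (P1 b) (@zero_e R V adj) (fun w => - unit_v R v w) 0)
    & (2 <= b -> forall v : V,
         (* y_v <= 1 *)
         facet_defining (P1 b) (@zero_e R V adj) (unit_v R v) 1)].
Proof.
have N1_neq0 : (-1 : R) != 0 by rewrite oppr_eq0 oner_eq0.
split=> [b2 e | b1 v | b2 v].
- have b1 : 1 <= b by lra.
  apply: (facet_defining_coord (d := 1 / 2) b1 _ N1_neq0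
            (@linform_unit_eN _ _ _ e) (P1_edge_point adj_irr e b1)).
  + by move=> p [x_ge0 _ _ _]; rewrite linform_unit_eN mulN1r oppr_le0; exact: x_ge0.
  + by rewrite linform_unit_eN /= eqxx mulr0.
  + by apply/eqP; lra.
  + by move=> k _; exact: P1_shift_edge_point.
- have b0 : 0 <= b by lra.
  apply: (facet_defining_coord b1 _ N1_neq0 (@linform_unit_vN _ _ adj v)
            (P1_qbase adj b0) _ (oner_neq0 _)).
  + by move=> p [_ p_01 _ _]; rewrite linform_unit_vN mulN1r oppr_le0; case: (p_01 v).
  + by rewrite linform_unit_vN mulr0.
  + by move=> k _; exact: P1_shift_qbase.
- have b1 : 1 <= b by lra.
  apply: (facet_defining_coord b1 _ (oner_neq0 _) (@linform_unit_v _ _ adj v)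
            (@P1_vertex_point _ _ adj b v b1) _ (oner_neq0 _)).
  + by move=> p [_ p_01 _ _]; rewrite linform_unit_v mul1r; case: (p_01 v).
  + by rewrite linform_unit_v /= eqxx mul1r mul1r add0r.
  + by move=> k; exact: P1_shift_vertex_point.
Qed.
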